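(* Let $C_n$ be the cycle on $n\ge 3$ vertices. Every ordered multiplicity list that is realized by some matrix in $\mathcal{S}(C_n)$ is realized by some matrix in $\mathcal{S}(C_n)$ that has the SMP.
   Context: For a graph $G$ on vertex set $\{1,\ldots,n\}$, $\mathcal{S}(G)$ is the set of real symmetric $n\times n$ matrices whose $(i,j)$-entry for $i\neq j$ is nonzero if and only if $\{i,j\}$ is an edge (diagonal entries arbitrary). For symmetric $A$ with distinct eigenvalues $\lambda_1<\cdots<\lambda_q$ of multiplicities $m_1,\ldots,m_q$, the ordered multiplicity list is $\mathbf{m}(A)=(m_1,\ldots,m_q)$. $\circ$ is the entrywise product and $[A,X]=AX-XA$. A symmetric matrix $A$ with $q$ distinct eigenvalues has the strong multiplicity property (SMP) if $X=O$ is the only real symmetric matrix with $A\circ X=O$, $I\circ X=O$, $[A,X]=O$ and $\operatorname{tr}(A^kX)=0$ for $k=0,\ldots,q-1$. *)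

From HB Require Import structures.
From mathcomp Require Import all_boot all_order all_algebra.
From mathcomp Require Import reals.
Set Implicit Arguments. Unset Strict Implicit. Unset Printing Implicit Defensive.
Import Order.TTheory GRing.Theory Num.Theory.
Local Open Scope ring_scope.

Definition cycle_adj (n : nat) (i j : 'I_n) : bool :=
  (nat_of_ord j == (i.+1 %% n)%N) || (nat_of_ord i == (j.+1 %% n)%N).

Definition in_S (R : realType) (n : nat) (adj : 'I_n -> 'I_n -> bool)
  (A : 'M[R]_n) : Prop :=
  A^T = A /\ (forall i j : 'I_n, i != j -> (A i j != 0) = adj i j).

Definition mult_list (R : realType) (n : nat) (A : 'M[R]_n) (m : seq nat) : Prop :=
  exists lam : seq R,
    [/\ size lam = size m, sorted <%R lam, all (fun k => 0 < k)%N m &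
        char_poly A = \prod_(i < size m) ('X - (lam`_i)%:P) ^+ (nth 0%N m i)].

Definition num_distinct_eig (R : realType) (n : nat) (A : 'M[R]_n) (q : nat) : Prop :=
  exists lam : seq R,
    [/\ size lam = q, uniq lam & forall x : R, eigenvalue A x = (x \in lam)].

Definition SMP (R : realType) (n : nat) (A : 'M[R]_n) : Prop :=
  A^T = A /\
  exists q : nat, num_distinct_eig A q /\
    forall X : 'M[R]_n,
      X^T = X ->
      (forall i j, A i j * X i j = 0) ->
      (forall i, X i i = 0) ->
      A *m X = X *m A ->
      (forall k : nat, (k < q)%N -> \tr (A ^+ k *m X) = 0) ->
      X = 0.

From mathcomp Require Import all_boot all_order all_algebra.
From mathcomp Require Import reals zify ring.
Set Implicit Arguments.
Unset Strict Implicit.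
Unset Printing Implicit Defensive.
Import Order.TTheory GRing.Theory Num.Theory.
Local Open Scope ring_scope.

(* Every matrix A of S(C_n) already has the SMP.  Let X be symmetric with
   A o X = 0, zero diagonal and AX = XA.  Between vertices at cyclic distance
   at least k, the entry of A^k is the weight of a length-k path along the
   cycle if the distance is exactly k, and 0 otherwise.  By induction on k,
   X vanishes between vertices at distance < k: the entries of AX = XA next
   to the k-th band of X make its path-weighted entries constant around the
   cycle, so tr(A^k X) is 2n times that constant and must be 0.  The traces
   tr(A^k X) vanish for every k, not only k < q, because a real symmetric
   matrix is annihilated by the square-free part of its characteristic
   polynomial. *)


Lemma sym_mx_entry (T : Type) n (M : 'M[T]_n) : M^T = M -> forall i j, M i j = M j i.
Proof. by move=> symM i j; rewrite -{1}symM mxE. Qed.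

Section SymmetricMatrix.
Variables (R : realFieldType) (n' : nat).
Local Notation n := n'.+1.
Implicit Types (A B : 'M[R]_n) (p : {poly R}).

Lemma trmx_exp A k : A^T = A -> (A ^+ k)^T = A ^+ k.
Proof.
move=> symA; elim: k => [|k IHk]; first by rewrite !expr0 trmx1.
by rewrite exprS trmx_mul IHk symA -exprS exprSr.
Qed.

Lemma trmx_mul_self_eq0 B : B^T *m B = 0 -> B = 0.
Proof.
move=> BtB0; apply/matrixP=> i j; rewrite mxE.
have /eqP : (B^T *m B) j j = 0 by rewrite BtB0 mxE.
rewrite mxE psumr_eq0; last by move=> l _; rewrite mxE -expr2 sqr_ge0.
move=> /allP /(_ i (mem_index_enum _)) /implyP /(_ isT).
by rewrite mxE -expr2 sqrf_eq0 => /eqP.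
Qed.

Lemma sym_mx_nilpotent_eq0 B k : B^T = B -> B ^+ k.+1 = 0 -> B = 0.
Proof.
move=> symB; elim: k => [|k IHk]; first by rewrite expr1.
move=> Bk0; apply: IHk; apply: trmx_mul_self_eq0.
rewrite trmx_exp // mulmxE -exprD.
by rewrite -(subnK (_ : k.+2 <= k.+1 + k.+1)%N) ?exprD ?Bk0 ?mulr0 //; lia.
Qed.

Lemma horner_mx_sym A p : A^T = A -> (horner_mx A p)^T = horner_mx A p.
Proof.
move=> symA; rewrite -[p]coefK poly_def !rmorph_sum /= raddf_sum /=.
apply: eq_bigr => i _; rewrite linearZ /= rmorphXn /= horner_mx_X.
by rewrite linearZ /= trmx_exp.
Qed.

Lemma horner_mx_sym_exp_eq0 A p k :
  A^T = A -> horner_mx A (p ^+ k.+1) = 0 -> horner_mx A p = 0.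
Proof.
move=> symA; rewrite rmorphXn /=.
by apply: sym_mx_nilpotent_eq0; apply: horner_mx_sym.
Qed.

Lemma horner_mx_sym_char_radical A (lam : seq R) (m : seq nat) :
  A^T = A ->
  char_poly A = \prod_(i < size m) ('X - (lam`_i)%:P) ^+ (nth 0%N m i) ->
  horner_mx A (\prod_(i < size m) ('X - (lam`_i)%:P)) = 0.
Proof.
move=> symA charA; set p := \prod_(i < size m) _.
pose M := (\max_(i < size m) nth 0 m i)%N.
apply: (@horner_mx_sym_exp_eq0 _ _ M) => //.
have -> : p ^+ M.+1 = char_poly A *
    \prod_(i < size m) ('X - (lam`_i)%:P) ^+ (M.+1 - nth 0%N m i).
  rewrite charA -big_split /= /p -prodrXl; apply: eq_bigr => i _.
  rewrite -exprD subnKC // ltnW // ltnS.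
  exact: (@leq_bigmax _ (fun j : 'I_(size m) => nth 0%N m j) i).
by rewrite rmorphM /= Cayley_Hamilton mul0r.
Qed.

End SymmetricMatrix.

Lemma mxtrace_exp_mul_eq0 (F : fieldType) n' (A X : 'M[F]_n'.+1) (p : {poly F}) :
  p != 0 -> horner_mx A p = 0 ->
  (forall k, (k < (size p).-1)%N -> \tr (A ^+ k *m X) = 0) ->
  forall k, \tr (A ^+ k *m X) = 0.
Proof.
move=> p_neq0 Ap0 trX0 k.
have -> : A ^+ k = horner_mx A ('X^k %% p).
  rewrite -{1}(horner_mx_X A) -rmorphXn /= {1}(divp_eq ('X^k) p).
  by rewrite rmorphD rmorphM /= Ap0 mulr0 add0r.
rewrite -[_ %% p]coefK poly_def !rmorph_sum /= mulmx_suml raddf_sum /=.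
apply: big1 => i _; rewrite linearZ /= rmorphXn /= horner_mx_X -scalemxAl linearZ /=.
rewrite trX0 ?mulr0 //; apply: leq_trans (ltn_ord i) _.
by rewrite -ltnS prednK ?ltn_modp // size_poly_gt0.
Qed.

Lemma mult_list_num_distinct_eig (R : realType) n' (A : 'M[R]_n'.+1) m :
  mult_list A m -> num_distinct_eig A (size m).
Proof.
case=> lam [size_lam sorted_lam m_gt0 charA].
exists lam; split => //; first exact: lt_sorted_uniq.
move=> x; rewrite eigenvalue_root_char charA /root horner_prod.
under eq_bigr do rewrite horner_exp hornerXsubC.
apply/idP/idP.
  move/prodf_eq0 => [i _]; rewrite expf_eq0 subr_eq0 => /andP [_ /eqP ->].
  by rewrite mem_nth // size_lam.
move=> /(nthP 0) [i i_lt <-]; apply/prodf_eq0.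
have i_lt' : (i < size m)%N by rewrite -size_lam.
exists (Ordinal i_lt') => //=.
by rewrite expf_eq0 subrr eqxx andbT; apply: (allP m_gt0); rewrite mem_nth.
Qed.

Section CycleIndices.
Variable n' : nat.
Local Notation n := n'.+3.
Implicit Types (u v : 'I_n) (k : nat).

Lemma val_ZpD u v :
  nat_of_ord (u + v) = if (u + v < n)%N then (u + v)%N else (u + v - n)%N.
Proof.
rewrite /=; case: ltnP => uv_ge; first by rewrite modn_small.
rewrite -{1}(subnK uv_ge) modnDr modn_small //.
by have := ltn_ord u; have := ltn_ord v; lia.
Qed.

Lemma val_ZpN u : nat_of_ord (- u) = if nat_of_ord u == 0%N then 0%N else (n - u)%N.
Proof.
rewrite /=; case: eqP => [->|u_neq0]; first by rewrite subn0 modnn.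
by rewrite modn_small //; have := ltn_ord u; lia.
Qed.

Lemma val_Zp1 : nat_of_ord (1 : 'I_n) = 1%N. Proof. by []. Qed.

Lemma val_Zp_nat_small k : (k < n)%N -> nat_of_ord (k%:R : 'I_n) = k.
Proof. by move=> k_lt; rewrite Zp_nat /= modn_small. Qed.

Lemma eq_ordE u v : (u == v) = (nat_of_ord u == nat_of_ord v). Proof. by []. Qed.

(* [cdist_ge k d]: the displacement [d] around the n-cycle has cyclic
   distance at least [k] from [0], i.e. [k <= d <= n - k]. *)
Definition cdist_ge k (d : 'I_n) := (k <= d)%N && (d + k <= n)%N.

End CycleIndices.

(* Turns a goal about sums, opposites and equalities in ['I_n] into linear
   arithmetic on their values; context hypotheses [nat_of_ord k%:R = k] are
   used to evaluate numerals. *)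
Ltac ord_lia :=
  repeat match goal with x : 'I_?m |- _ =>
    lazymatch goal with
    | _ : is_true (nat_of_ord x < m)%N |- _ => fail
    | _ => pose proof (ltn_ord x)
    end end;
  rewrite ?/cdist_ge ?eq_ordE;
  repeat (first [rewrite val_ZpD | rewrite val_ZpN | rewrite val_Zp1]);
  repeat match goal with H : nat_of_ord (_%:R) = _ |- _ => rewrite H end;
  repeat (case: ifP); intros; lia.

Lemma cycle_adjE n' (i j : 'I_n'.+3) :
  cycle_adj i j = (j == i + 1) || (i == j + 1).
Proof.
have succE x : (x < n'.+3)%N ->
    (x.+1 %% n'.+3 = if (x + 1 < n'.+3)%N then x + 1 else x + 1 - n'.+3)%N.
  move=> x_lt; case: ifP => x1_lt; first by rewrite modn_small; lia.
  have -> : x.+1 = n'.+3 by lia.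
  by rewrite modnn; lia.
by rewrite /cycle_adj !succE ?ltn_ord //; ord_lia.
Qed.

Section CycleMatrixPowers.
Variables (R : numDomainType) (n' : nat).
Local Notation n := n'.+3.
Local Notation T := 'I_n.
Variable A : 'M[R]_n.
Hypothesis symA : A^T = A.
Hypothesis A_cycle : forall i j : T, i != j -> (A i j != 0) = cycle_adj i j.

Lemma A_nonadj_eq0 (i j : T) : i != j -> j != i + 1 -> i != j + 1 -> A i j = 0.
Proof.
move=> ij ji1 ij1; apply/eqP; apply: contraTT isT.
by rewrite A_cycle // cycle_adjE (negbTE ji1) (negbTE ij1).
Qed.

Definition edge_wt (i : T) := A i (i + 1).

Lemma edge_wt_neq0 i : edge_wt i != 0.
Proof. by rewrite /edge_wt A_cycle ?cycle_adjE ?eqxx //; ord_lia. Qed.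

Definition path_wt (i : T) k := \prod_(t < k) edge_wt (i + t%:R).

Lemma path_wt_neq0 i k : path_wt i k != 0.
Proof. by rewrite prodf_seq_neq0; apply/allP => t _; apply: edge_wt_neq0. Qed.

Lemma path_wt1 i : path_wt i 1 = edge_wt i.
Proof. by rewrite /path_wt big_ord1 /= addr0. Qed.

Lemma path_wtSr i k : path_wt i k.+1 = path_wt i k * edge_wt (i + k%:R).
Proof. by rewrite /path_wt big_ord_recr. Qed.

Lemma path_wtSl i k : path_wt i k.+1 = edge_wt i * path_wt (i + 1) k.
Proof.
rewrite /path_wt big_ord_recl /= addr0; congr (_ * _).
by apply: eq_bigr => t _; rewrite /bump /= add1n -natr1 addrA addrAC.
Qed.

(* The total weight of the monotone walks of length [k] from [i] to [j]
   around the cycle. *)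
Definition walk_wt k (i j : T) :=
  (if j == i + k%:R then path_wt i k else 0) +
  (if i == j + k%:R then path_wt j k else 0).

Lemma exp1_cycle_entry (i j : T) : cdist_ge 1 (j - i) -> A i j = walk_wt 1 i j.
Proof.
rewrite /walk_wt !path_wt1 => dist_ij.
case: (eqVneq j (i + 1)) => [->|ji1].
  by rewrite ifF ?addr0 //; ord_lia.
case: (eqVneq i (j + 1)) => [->|ij1]; first by rewrite add0r (sym_mx_entry symA).
by rewrite A_nonadj_eq0 ?addr0 //; move: dist_ij; ord_lia.
Qed.

Section PowerStep.
Variable k : nat.
Hypotheses (k_gt0 : (0 < k)%N) (k_small : (k.+1.*2 <= n)%N).
Hypothesis expA_entry :
  forall i j : T, cdist_ge k (j - i) -> (A ^+ k) i j = walk_wt k i j.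

Lemma exp_mul_cycle_entry (i j l : T) : cdist_ge k.+1 (j - i) ->
  (A ^+ k) i l * A l j =
    (if (l == i + k%:R) && (j == i + k.+1%:R) then path_wt i k * edge_wt l else 0)
  + (if (l == j + 1) && (i == j + k.+1%:R) then path_wt l k * edge_wt j else 0).
Proof.
have k_val : nat_of_ord (k%:R : T) = k by apply: val_Zp_nat_small; lia.
have k1_val : nat_of_ord (k.+1%:R : T) = k.+1 by apply: val_Zp_nat_small; lia.
move=> dist_ij.
case: (eqVneq l j) => [->|lj].
  rewrite expA_entry /walk_wt; last by move: dist_ij; ord_lia.
  rewrite !ifF /= ?addr0 ?mul0r //; move: dist_ij; ord_lia.
case: (eqVneq (l + 1) j) => [l1j|l1j]; first subst j.
  rewrite expA_entry /walk_wt; last by move: dist_ij; ord_lia.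
  have -> : (i == l + k%:R) = false by move: dist_ij; ord_lia.
  have -> : (l + 1 == i + k.+1%:R) = (l == i + k%:R) by ord_lia.
  have -> : (l == l + 1 + 1) = false by ord_lia.
  by rewrite andbb !addr0; case: ifP; rewrite ?mul0r.
case: (eqVneq l (j + 1)) => [->|lj1].
  rewrite expA_entry /walk_wt; last by move: dist_ij; ord_lia.
  have -> : (j + 1 == i + k%:R) = false by move: dist_ij; ord_lia.
  have -> : (i == j + 1 + k%:R) = (i == j + k.+1%:R) by ord_lia.
  by rewrite (sym_mx_entry symA) /= !add0r; case: ifP; rewrite ?mul0r.
rewrite [A l j]A_nonadj_eq0 ?mulr0 //; last by rewrite eq_sym.
by rewrite ifF ?addr0 ?andbF //; move: l1j; ord_lia.
Qed.

End PowerStep.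

Lemma sum_if_eq (c : T) (b : bool) (F : T -> R) :
  \sum_l (if (l == c) && b then F l else 0) = if b then F c else 0.
Proof.
case: b; last by rewrite big1 // => l; rewrite andbF.
by rewrite (bigD1 c) //= eqxx big1 ?addr0 // => l /negbTE ->.
Qed.

Lemma exp_cycle_entry k (i j : T) : (0 < k)%N -> (k.*2 <= n)%N ->
  cdist_ge k (j - i) -> (A ^+ k) i j = walk_wt k i j.
Proof.
elim: k i j => [//|k IHk] i j _ k_small.
have [->|k_gt0] := posnP k; first by rewrite expr1; apply: exp1_cycle_entry.
have expA_entry i' j' : cdist_ge k (j' - i') -> (A ^+ k) i' j' = walk_wt k i' j'.
  by apply: IHk => //; lia.
move=> dist_ij; rewrite exprSr -mulmxE mxE.
rewrite (eq_bigr _ (fun l _ => exp_mul_cycle_entry k_gt0 k_small expA_entry l dist_ij)).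
rewrite big_split /= !sum_if_eq /walk_wt path_wtSr path_wtSl.
by congr (_ + _); case: ifP => //; rewrite mulrC.
Qed.

End CycleMatrixPowers.

Section CycleCommutant.
Variables (R : numDomainType) (n' : nat).
Local Notation n := n'.+3.
Local Notation T := 'I_n.
Variables A X : 'M[R]_n.
Hypothesis symA : A^T = A.
Hypothesis A_cycle : forall i j : T, i != j -> (A i j != 0) = cycle_adj i j.
Hypothesis symX : X^T = X.
Hypothesis AX_disjoint : forall i j, A i j * X i j = 0.
Hypothesis X_diag0 : forall i, X i i = 0.
Hypothesis AX_comm : A *m X = X *m A.

Local Notation edge_wt := (edge_wt A).
Local Notation path_wt := (path_wt A).

Lemma X_edge_eq0 i : X i (i + 1) = 0.
Proof.
have /eqP := AX_disjoint i (i + 1); rewrite mulf_eq0.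
by have /negbTE -> := edge_wt_neq0 A_cycle i => /eqP.
Qed.

Definition X_vanishes_below k := forall i j : T, ~~ cdist_ge k (j - i) -> X i j = 0.

Lemma X_vanishes_below2 : X_vanishes_below 2.
Proof.
move=> i j; case: (eqVneq j i) => [->|ji]; first by rewrite X_diag0.
case: (eqVneq j (i + 1)) => [->|ji1]; first by rewrite X_edge_eq0.
case: (eqVneq i (j + 1)) => [->|ij1]; first by rewrite (sym_mx_entry symX) X_edge_eq0.
by move: ji ji1 ij1; ord_lia.
Qed.

Definition diag_wt k i := path_wt i k * X i (i + k%:R).

Section DiagonalStep.
Variable k : nat.
Hypotheses (k_ge2 : (2 <= k)%N) (k_small : (k.*2 <= n)%N).
Hypothesis X_below : X_vanishes_below k.

(* The [(i + 1, i + k)] entry of [A X = X A]. *)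
Lemma edge_wt_X_shift i :
  edge_wt i * X i (i + k%:R) = edge_wt (i + k%:R) * X (i + 1) (i + 1 + k%:R).
Proof.
have k_val : nat_of_ord (k%:R : T) = k by apply: val_Zp_nat_small; lia.
set j := i + 1; set m := i + k%:R.
have := congr1 (fun M : 'M[R]_n => M j m) AX_comm; rewrite !mxE.
rewrite (bigD1 i) //= big1 ?addr0; last first.
  move=> l li.
  case: (eqVneq l j) => [->|lj]; first by rewrite X_below ?mulr0 // /m /j; ord_lia.
  case: (eqVneq l (j + 1)) => [->|lj1].
    by rewrite X_below ?mulr0 // /m /j; ord_lia.
  rewrite (A_nonadj_eq0 A_cycle) ?mul0r // 1?eq_sym //; move: li; rewrite /j; ord_lia.
rewrite (bigD1 (m + 1)) //= big1 ?addr0; last first.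
  move=> l lm1.
  case: (eqVneq l m) => [->|lm]; first by rewrite X_below ?mul0r // /m /j; ord_lia.
  case: (eqVneq (l + 1) m) => [l1m|l1m].
    by rewrite X_below ?mul0r //; move/eqP: l1m; rewrite /m /j; ord_lia.
  by rewrite (A_nonadj_eq0 A_cycle) ?mulr0 // eq_sym.
have -> : m + 1 = j + k%:R by rewrite /m /j addrAC.
by rewrite (sym_mx_entry symA) [A (j + _) _](sym_mx_entry symA) => ->; rewrite mulrC /m /j addrAC.
Qed.

Lemma diag_wt_shift i : diag_wt k i = diag_wt k (i + 1).
Proof.
have [k' def_k] : exists k', k = k'.+1 by exists k.-1; lia.
rewrite /diag_wt def_k path_wtSl path_wtSr -def_k.
have -> : i + 1 + k'%:R = i + k%:R by rewrite def_k -natr1; ring.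
by rewrite -mulrA mulrCA edge_wt_X_shift mulrA.
Qed.

Lemma diag_wt_const i : diag_wt k i = diag_wt k 0.
Proof.
have diag_nat t : diag_wt k t%:R = diag_wt k 0.
  by elim: t => [|t IHt] //; rewrite -natr1 -diag_wt_shift.
by rewrite -(natr_Zp i) diag_nat.
Qed.

Lemma exp_mul_X_entry i j : (A ^+ k) i j * X j i =
  (if j == i + k%:R then diag_wt k i else 0) +
  (if i == j + k%:R then diag_wt k j else 0).
Proof.
have k_val : nat_of_ord (k%:R : T) = k by apply: val_Zp_nat_small; lia.
have [dist_ij|near_ij] := boolP (cdist_ge k (j - i)).
  rewrite (exp_cycle_entry symA A_cycle) //; last lia.
  rewrite /walk_wt mulrDl; congr (_ + _); case: eqP => [->|]; rewrite ?mul0r //.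
  by rewrite /diag_wt (sym_mx_entry symX).
rewrite X_below ?mulr0; last by move: near_ij; ord_lia.
by rewrite !ifF ?addr0 //; move: near_ij; ord_lia.
Qed.

Lemma mxtrace_exp_mul_diag : \tr (A ^+ k *m X) = (\sum_i diag_wt k i) *+ 2.
Proof.
rewrite /mxtrace; under eq_bigr => i _ do
  rewrite mxE (eq_bigr _ (fun j _ => exp_mul_X_entry i j)) big_split /=.
rewrite big_split /= [in X in _ + X = _]exchange_big /= mulr2n.
by congr (_ + _); apply: eq_bigr => i _; rewrite -big_mkcond big_pred1_eq.
Qed.

Lemma X_vanishes_below_step : \tr (A ^+ k *m X) = 0 -> X_vanishes_below k.+1.
Proof.
move=> trX0; have k_val : nat_of_ord (k%:R : T) = k by apply: val_Zp_nat_small; lia.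
have diag0 : diag_wt k 0 = 0.
  move: trX0; rewrite mxtrace_exp_mul_diag (eq_bigr _ (fun i _ => diag_wt_const i)).
  by rewrite sumr_const card_ord -mulrnA => /eqP; rewrite mulrn_eq0 /= => /eqP.
have X_far i : X i (i + k%:R) = 0.
  have /eqP := diag_wt_const i; rewrite diag0 /diag_wt mulf_eq0.
  by rewrite (negbTE (path_wt_neq0 A_cycle _ _)) => /eqP.
move=> i j near_ij.
case: (eqVneq j (i + k%:R)) => [->|ji]; first exact: X_far.
case: (eqVneq i (j + k%:R)) => [->|ij]; first by rewrite (sym_mx_entry symX) X_far.
by apply: X_below; move: near_ij ji ij; ord_lia.
Qed.

End DiagonalStep.

Lemma cycle_commutant_eq0 : (forall k, \tr (A ^+ k *m X) = 0) -> X = 0.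
Proof.
move=> trX0.
have X_below k : (2 <= k)%N -> (k.-1.*2 <= n)%N -> X_vanishes_below k.
  elim: k => [//|k IHk] k_ge2 k_small.
  have [->|k_ne1] := eqVneq k 1%N; first exact: X_vanishes_below2.
  by apply: X_vanishes_below_step; [lia | lia | apply: IHk; lia | exact: trX0].
have n_half := odd_double_half n.
(* No displacement is at cyclic distance more than [n./2] from [0]. *)
apply/matrixP => i j; rewrite mxE; apply: (X_below (n./2).+1).
- by move: n_half; case: (odd n) => /=; lia.
- by move: n_half; case: (odd n) => /=; lia.
- by rewrite /cdist_ge; move: n_half (ltn_ord (j - i)); case: (odd n) => /=; lia.
Qed.

End CycleCommutant.

Lemma cycle_SMP (R : realType) n' (A : 'M[R]_n'.+3) m :
  in_S (@cycle_adj _) A -> mult_list A m -> SMP A.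
Proof.
move=> [symA A_cycle] mult_A; split=> //; exists (size m).
split; first exact: mult_list_num_distinct_eig.
move=> X symX AX_disjoint X_diag0 AX_comm trX0.
apply: (cycle_commutant_eq0 symA A_cycle symX AX_disjoint X_diag0 AX_comm).
have [lam [size_lam _ _ charA]] := mult_A.
set p := \prod_(i < size m) ('X - (lam`_i)%:P).
have size_p : size p = (size m).+1.
  have -> : p = \prod_(x <- lam) ('X - x%:P) by rewrite (big_nth 0) big_mkord size_lam.
  by rewrite size_prod_XsubC size_lam.
apply: (@mxtrace_exp_mul_eq0 _ _ _ _ p).
- by rewrite -size_poly_gt0 size_p.
- exact: horner_mx_sym_char_radical charA.
- by rewrite size_p.
Qed.

Theorem theorem4p2 (R : realType) (n : nat) (m : seq nat) :
  (3 <= n)%N ->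
  (exists A : 'M[R]_n, in_S (@cycle_adj n) A /\ mult_list A m) ->
  exists B : 'M[R]_n, [/\ in_S (@cycle_adj n) B, mult_list B m & SMP B].
Proof.
case: n => [|[|[|n']]] // _ [A [S_A mult_A]].
by exists A; split=> //; apply: cycle_SMP mult_A.
Qed.
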